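(* Let $G$ be a graph and $k \ge 0$ an integer. Then $G$ has a 2-coloring of cost at most $k$ if and only if there exists a set $S \subseteq E(G)$ of at most $k$ edges such that $G/S$ is bipartite.
   Context: All graphs are finite, simple and undirected. A 2-coloring of $G$ is any function $\phi: V(G)\to\{1,2\}$ (not necessarily proper). A monochromatic component of $\phi$ is a vertex set $X$ such that $G[X]$ is a connected component of $G[\phi^{-1}(1)]$ or of $G[\phi^{-1}(2)]$. The cost of $\phi$ is $\sum_{X} (|X|-1)$, the sum over all monochromatic components $X$ of $\phi$. Contracting an edge $xy$ deletes $x$ and $y$ and replaces them by a new vertex adjacent to exactly the vertices adjacent to at least one of $x,y$. For $S\subseteq E(G)$, $G/S$ is the graph obtained by repeatedly contracting an edge of $S$ until none remains; equivalently, by contracting all edges of a spanning forest of $(V(G),S)$. *)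

(* A finite simple graph is a symmetric irreflexive
   relation e : rel T on a finType T. *)
From mathcomp Require Import all_boot.
Set Implicit Arguments. Unset Strict Implicit. Unset Printing Implicit Defensive.

Definition edges (T : finType) (e : rel T) : {set {set T}} :=
  [set [set x; y] | x in T, y in T & e x y].

Definition induced (T : finType) (e : rel T) (P : pred T) : rel T :=
  fun x y => [&& P x, P y & e x y].

Definition color_comps (T : finType) (e : rel T) (phi : T -> bool) (c : bool)
  : {set {set T}} :=
  [set [set y | connect (induced e (fun v => phi v == c)) x y]
     | x in [set x | phi x == c]].

Definition mono_comps (T : finType) (e : rel T) (phi : T -> bool) : {set {set T}} :=
  color_comps e phi true :|: color_comps e phi false.

Definition cost (T : finType) (e : rel T) (phi : T -> bool) : nat :=
  \sum_(X in mono_comps e phi) (#|X| - 1).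

(* Contraction G/S for S a set of edges: vertices are the connected components
   of the spanning subgraph (V(G), S); two distinct such classes are adjacent
   iff some edge of G joins them. *)
Definition srel (T : finType) (S : {set {set T}}) : rel T :=
  fun x y => [set x; y] \in S.

Definition contract_V (T : finType) (S : {set {set T}}) : {set {set T}} :=
  [set [set y | connect (srel S) x y] | x : T].

Definition contract_adj (T : finType) (e : rel T) : rel {set T} :=
  fun A B => (A != B) && [exists x in A, exists y in B, e x y].

Definition bipartite (U : finType) (r : rel U) (V : {set U}) : Prop :=
  exists f : U -> bool, forall A B, A \in V -> B \in V -> r A B -> f A != f B.

From mathcomp Require Import all_boot zify.
Set Implicit Arguments. Unset Strict Implicit. Unset Printing Implicit Defensive.

(* The cost of a colouring is |V| minus the number of monochromatic components,
   i.e. the size of a spanning forest of the monochromatic edges; contracting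
   that forest leaves a graph properly coloured by the colouring.  Conversely, a
   proper 2-colouring of G/S pulls back to a colouring of G whose monochromatic
   components are exactly the components of (V, S), and a spanning forest of
   (V, S) has at most |S| edges. *)

Lemma eq_set2 (T : finType) (x y a b : T) : [set x; y] = [set a; b] ->
  (x = a /\ y = b) \/ (x = b /\ y = a).
Proof.
move=> E.
have /set2P xab : x \in [set a; b] by rewrite -E set21.
have /set2P yab : y \in [set a; b] by rewrite -E set22.
have /set2P axy : a \in [set x; y] by rewrite E set21.
have /set2P bxy : b \in [set x; y] by rewrite E set22.
by case: xab yab axy bxy => -> [] -> [] ? [] ?; subst; auto.
Qed.

Section SpanningSubgraphs.
Variable T : finType.
Implicit Types (S : {set {set T}}) (r : rel T) (x y u v : T).

Definition scomp S x := [set y | connect (srel S) x y].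

Lemma srel_sym S : symmetric (srel S).
Proof. by move=> x y; rewrite /srel setUC. Qed.

Lemma connect_srel_sym S : connect_sym (srel S).
Proof. exact/sym_connect_sym/srel_sym. Qed.

Lemma eq_scomp S x y : (scomp S x == scomp S y) = connect (srel S) x y.
Proof.
apply/eqP/idP => [Exy|xy].
  have : y \in scomp S y by rewrite inE connect0.
  by rewrite -Exy inE.
apply/setP=> z; rewrite !inE; apply/idP/idP; last exact: connect_trans.
by apply: connect_trans; rewrite connect_srel_sym.
Qed.

Lemma srel_sub S S' : S \subset S' -> subrel (srel S) (srel S').
Proof. by move/subsetP=> sub x y; apply: sub. Qed.

Lemma connect_srel_sub S S' :
  S \subset S' -> subrel (connect (srel S)) (connect (srel S')).
Proof. by move=> sub; apply: connect_sub => x y /(srel_sub sub)/connect1. Qed.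

Lemma eq_contract_V S S' :
  connect (srel S) =2 connect (srel S') -> contract_V S = contract_V S'.
Proof. by move=> eqc; apply: eq_imset => x; apply/setP=> y; rewrite !inE eqc. Qed.

Lemma srel_edges r : symmetric r -> srel (edges r) =2 r.
Proof.
move=> r_sym x y; apply/imset2P/idP => [[a b _ ab]|rxy].
  by move: ab; rewrite inE => rab /eq_set2 [[-> ->]|[-> ->]]; rewrite // r_sym.
by exists x y; rewrite ?inE.
Qed.

Lemma edges_sub r r' : subrel r r' -> edges r \subset edges r'.
Proof.
move=> rr'; apply/subsetP=> _ /imset2P[x y _ + ->]; rewrite inE => /rr' rxy.
by apply/imset2P; exists x y; rewrite ?inE.
Qed.

Definition coarsen S (C : {set T}) :=
  [set y | [exists x in C, connect (srel S) x y]].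

Lemma coarsen_scomp S' S x : S' \subset S -> coarsen S (scomp S' x) = scomp S x.
Proof.
move=> sub; apply/setP=> y; rewrite !inE; apply/existsP/idP => [[z]|xy].
  by rewrite inE => /andP[/(connect_srel_sub sub)]; apply: connect_trans.
by exists x; rewrite inE connect0.
Qed.

Lemma contract_V_coarsen S' S :
  S' \subset S -> contract_V S = coarsen S @: contract_V S'.
Proof.
by move=> sub; rewrite -imset_comp; apply: eq_imset => x; rewrite /= coarsen_scomp.
Qed.

Lemma card_contract_V0 : #|contract_V (set0 : {set {set T}})| = #|T|.
Proof.
rewrite card_imset // => x y /eqP; rewrite eq_scomp => /connectP[[|z p]] //=.
by rewrite /srel inE.
Qed.

Lemma card_contract_V_ltn S' S u v : S' \subset S ->
  connect (srel S) u v -> ~~ connect (srel S') u v ->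
  #|contract_V S| < #|contract_V S'|.
Proof.
move=> sub uv; apply: contraNT; rewrite -leqNgt (contract_V_coarsen sub).
move=> le_card.
have /imset_injP inj : #|coarsen S @: contract_V S'| == #|contract_V S'|.
  by rewrite eqn_leq leq_imset_card.
rewrite -eq_scomp; apply/eqP/inj; rewrite ?imset_f // !coarsen_scomp //.
by apply/eqP; rewrite eq_scomp.
Qed.

Section RemoveEdge.
Variables (S : {set {set T}}) (u v : T).
Let S' := S :\ [set u; v].

Lemma connect_srelD1 x y : connect (srel S) x y ->
  [|| connect (srel S') x y, connect (srel S') x u | connect (srel S') x v].
Proof.
pose a := [pred z | [|| connect (srel S') x z, connect (srel S') x u
                      | connect (srel S') x v]].
have a_closed : closed (srel S) a.
  apply: (intro_closed (@connect_srel_sym S)) => z w zw.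
  rewrite !inE => /or3P[xz|->|->]; rewrite ?orbT //.
  have [zw_uv|ne] := eqVneq [set z; w] [set u; v].
    have /set2P[<-|<-] : z \in [set u; v] by rewrite -zw_uv set21.
      by rewrite xz orbT.
    by rewrite xz !orbT.
  by rewrite (connect_trans xz) // connect1 // /srel in_setD1 ne.
by move=> xy; have := closed_connect a_closed xy; rewrite !inE connect0 => <-.
Qed.

Lemma card_contract_VD1 : #|contract_V S'| <= #|contract_V S|.+1.
Proof.
have sub : S' \subset S by apply: subD1set.
set A := contract_V S' :\ scomp S' v.
(* Two S'-components other than that of v which merge in S are joined by a path
   through uv, hence both contain u. *)
have inj : {in A &, injective (coarsen S)}.
  move=> C D /setD1P[nxv /imsetP[x _ Cx]] /setD1P[nyv /imsetP[y _ Dy]]; subst C D.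
  move: nxv nyv; rewrite !coarsen_scomp // !eq_scomp => nxv nyv /eqP.
  rewrite eq_scomp => xy; apply/eqP; rewrite eq_scomp.
  case/or3P: (connect_srelD1 xy) => [//|xu|xv]; last by rewrite xv in nxv.
  rewrite connect_srel_sym in xy.
  case/or3P: (connect_srelD1 xy) => [|yu|yv]; last by rewrite yv in nyv.
    by rewrite connect_srel_sym.
  by rewrite (connect_trans xu) // connect_srel_sym.
have le_A : #|A| <= #|contract_V S|.
  rewrite -(card_in_imset inj) (contract_V_coarsen sub).
  by apply/subset_leq_card/imsetS/subD1set.
by rewrite (cardsD1 (scomp S' v)) -/A -add1n leq_add ?leq_b1.
Qed.

End RemoveEdge.

Lemma connect_srelD1_redundant S a :
  (forall u v, a = [set u; v] -> connect (srel (S :\ a)) u v) ->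
  connect (srel (S :\ a)) =2 connect (srel S).
Proof.
move=> red x y; apply/idP/idP; first exact/connect_srel_sub/subD1set.
apply: connect_sub => z w zw; have [zw_a|ne] := eqVneq [set z; w] a.
  exact: red.
by apply: connect1; rewrite /srel in_setD1 ne.
Qed.

Lemma connect_srelU1 S S' a : connect (srel S) =2 connect (srel S') ->
  connect (srel (a |: S)) =2 connect (srel (a |: S')).
Proof.
have sub S1 S2 : connect (srel S1) =2 connect (srel S2) ->
    subrel (connect (srel (a |: S1))) (connect (srel (a |: S2))).
  move=> eqc; apply: connect_sub => x y; rewrite /srel in_setU1 => /orP[xy|xy].
    by apply: connect1; rewrite /srel in_setU1 xy.
  by apply: connect_srel_sub (subsetUr _ _) _ _ _; rewrite -eqc connect1.
by move=> eqc x y; apply/idP/idP; apply: sub.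
Qed.

Lemma spanning_forest S : exists F : {set {set T}}, [/\ F \subset S,
  connect (srel F) =2 connect (srel S) & #|F| + #|contract_V S| = #|T|].
Proof.
have [n] := ubnP #|S|; elim: n S => // n IHn S /ltnSE le_Sn.
have [->|[a aS]] := set_0Vmem S.
  by exists set0; rewrite sub0set card_contract_V0 cards0.
set S' := S :\ a.
have [|F [FS' connF cardF]] := IHn S'.
  by move: le_Sn; rewrite (cardsD1 a) aS.
have [/existsP[u /existsP[v /andP[/eqP auv nuv]]]|red] :=
  boolP [exists u, exists v, (a == [set u; v]) && ~~ connect (srel S') u v].
  have aF : a \notin F by apply/negP => /(subsetP FS'); rewrite in_setD1 eqxx.
  have uv : connect (srel S) u v by rewrite connect1 // /srel -auv.
  have := card_contract_V_ltn (subD1set S a) uv nuv.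
  have := card_contract_VD1 S u v; rewrite -auv -/S'.
  exists (a |: F); split.
  - by rewrite subUset sub1set aS (subset_trans FS') ?subD1set.
  - by move=> x y; rewrite (connect_srelU1 a connF) /S' setD1K.
  - by rewrite cardsU1 aF; lia.
have red' u v : a = [set u; v] -> connect (srel S') u v.
  move=> auv; apply/negPn/negP=> nuv; move/existsP: red; apply.
  by exists u; apply/existsP; exists v; rewrite auv eqxx nuv.
have connS' := connect_srelD1_redundant red'.
exists F; split.
- exact: subset_trans FS' (subD1set S a).
- by move=> x y; rewrite connF connS'.
- by rewrite -(eq_contract_V connS').
Qed.

Lemma sum_contract_V S :
  \sum_(C in contract_V S) (#|C| - 1) = #|T| - #|contract_V S|.
Proof.
have sum_card : \sum_(C in contract_V S) #|C| = #|T|.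
  rewrite -sum1_card (partition_big_imset (scomp S)).
  apply: eq_bigr => _ /imsetP[x _ ->]; rewrite sum1_card.
  by apply: eq_card => y; rewrite [RHS]inE inE -eq_scomp eq_sym.
have sum_split : \sum_(C in contract_V S) (#|C| - 1) + #|contract_V S|
                 = \sum_(C in contract_V S) #|C|.
  rewrite -sum1_card -big_split; apply: eq_bigr => _ /imsetP[x _ ->] /=.
  by rewrite subnK //; apply/card_gt0P; exists x; rewrite inE connect0.
by rewrite -sum_card -sum_split addnK.
Qed.

End SpanningSubgraphs.

Section Colourings.
Variables (T : finType) (e : rel T).
Hypothesis e_sym : symmetric e.
Implicit Types (phi : T -> bool) (S : {set {set T}}).

Definition mono_rel phi : rel T := [rel x y | e x y && (phi x == phi y)].

Lemma mono_rel_sym phi : symmetric (mono_rel phi).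
Proof. by move=> x y; rewrite /mono_rel /= e_sym eq_sym. Qed.

Lemma connect_mono_rel_colour phi x y :
  connect (mono_rel phi) x y -> phi x = phi y.
Proof.
have closed_colour : closed (mono_rel phi) [pred z | phi z == phi x].
  apply: (intro_closed (sym_connect_sym (@mono_rel_sym phi))) => z w.
  by rewrite !inE => /andP[_ /eqP <-].
by move/(closed_connect closed_colour); rewrite !inE eqxx => /esym/eqP.
Qed.

Lemma connect_induced_colour phi (c : bool) x : phi x = c ->
  connect (induced e (fun w => phi w == c)) x =1 connect (mono_rel phi) x.
Proof.
move=> <- y; apply/idP/idP.
  apply: connect_sub => z w /and3P[/eqP zx /eqP wx zw].
  by apply: connect1; rewrite /mono_rel /= zw zx wx eqxx.
pose a := [pred z | (phi z == phi x)
                    && connect (induced e (fun w => phi w == phi x)) x z].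
have a_closed : closed (mono_rel phi) a.
  apply: (intro_closed (sym_connect_sym (@mono_rel_sym phi))) => z w.
  case/andP=> zw /eqP zw_col /andP[/eqP zx xz]; rewrite inE -zw_col zx eqxx.
  by rewrite (connect_trans xz) // connect1 // /induced zw -zw_col zx eqxx.
by move/(closed_connect a_closed); rewrite !inE eqxx connect0 => /esym/andP[].
Qed.

Lemma mono_compsE phi :
  mono_comps e phi = [set [set y | connect (mono_rel phi) x y] | x : T].
Proof.
apply/setP=> C; rewrite in_setU; apply/orP/imsetP => [|[x _ ->]].
  case=> /imsetP[x]; rewrite inE => /eqP xc ->; exists x => //;
    by apply/setP=> y; rewrite !inE (connect_induced_colour xc).
have [xc|/negbTE xc] := boolP (phi x); [left|right]; apply/imsetP; exists x;
  by rewrite ?inE ?xc //; apply/setP=> y; rewrite !inE connect_induced_colour.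
Qed.

Lemma cost_mono_rel phi S : connect (mono_rel phi) =2 connect (srel S) ->
  cost e phi = #|T| - #|contract_V S|.
Proof.
move=> eqc; rewrite /cost mono_compsE -sum_contract_V.
suff -> : [set [set y | connect (mono_rel phi) x y] | x : T] = contract_V S by [].
by apply: eq_imset => x; apply/setP=> y; rewrite !inE eqc.
Qed.

Lemma contraction_bipartite phi S : connect (srel S) =2 connect (mono_rel phi) ->
  bipartite (contract_adj e) (contract_V S).
Proof.
move=> eqc; exists (fun A : {set T} => [exists x in A, phi x]).
have colour_scomp x : [exists y in scomp S x, phi y] = phi x.
  apply/existsP/idP => [[y /andP[]]|px]; last by exists x; rewrite inE connect0 px.
  by rewrite inE eqc => /connect_mono_rel_colour ->.
move=> _ _ /imsetP[a _ ->] /imsetP[b _ ->]; rewrite !colour_scomp.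
case/andP=> neq /existsP[x /andP[ax /existsP[y /andP[by_ xy]]]].
move: ax by_; rewrite !inE !eqc => ax by_.
rewrite (connect_mono_rel_colour ax) (connect_mono_rel_colour by_).
apply: contra neq => /eqP xy_col; rewrite eq_scomp eqc (connect_trans ax) //.
apply: (@connect_trans _ _ y).
  by rewrite connect1 // /mono_rel /= xy xy_col eqxx.
by rewrite (sym_connect_sym (@mono_rel_sym phi)).
Qed.

Lemma bipartite_mono_rel S (f : {set T} -> bool) : S \subset edges e ->
  (forall A B, A \in contract_V S -> B \in contract_V S ->
     contract_adj e A B -> f A != f B) ->
  connect (mono_rel (f \o scomp S)) =2 connect (srel S).
Proof.
move=> sub fP x y; apply/idP/idP; apply: connect_sub => {}x {}y.
  case/andP=> xy /eqP /= fxy; rewrite -eq_scomp; apply: contraT => neq.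
  suff : f (scomp S x) != f (scomp S y) by rewrite fxy eqxx.
  apply: fP; rewrite ?imset_f // /contract_adj neq /=.
  by apply/existsP; exists x; rewrite inE connect0; apply/existsP; exists y;
    rewrite inE connect0.
move=> sxy; apply: connect1.
rewrite /mono_rel /= -(srel_edges e_sym) (srel_sub sub sxy) /=.
by apply/eqP; congr f; apply/eqP; rewrite eq_scomp connect1.
Qed.

End Colourings.

Theorem lemma1 (T : finType) (e : rel T) (e_sym : symmetric e)
  (e_irr : irreflexive e) (k : nat) :
  (exists phi : T -> bool, cost e phi <= k) <->
  (exists S : {set {set T}},
     [/\ S \subset edges e, #|S| <= k & bipartite (contract_adj e) (contract_V S)]).
Proof.
split=> [[phi le_cost_k]|[S [sub le_S_k [f fP]]]].
  have conn_mono := eq_connect (srel_edges (mono_rel_sym e_sym phi)).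
  have [F [FE connF cardF]] := spanning_forest (edges (mono_rel e phi)).
  have cost_phi := cost_mono_rel e_sym (fun x y => esym (conn_mono x y)).
  exists F; split.
  - by apply: subset_trans FE (edges_sub _) => x y /andP[].
  - by move: le_cost_k; rewrite cost_phi; lia.
  - by apply: (contraction_bipartite e_sym) => x y; rewrite connF conn_mono.
exists (f \o scomp S).
rewrite (cost_mono_rel e_sym (bipartite_mono_rel e_sym sub fP)).
have [F [FS _ cardF]] := spanning_forest S.
by have := subset_leq_card FS; lia.
Qed.
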